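(* Let $T \subseteq R$ and let $b = \pi_T x \in \mathbb{Z}/m\mathbb{Z}$ where $\pi_T = \prod_{i \in T} p_i$ and $x$ is an integer with $\gcd(x, m/g_T) = 1$. Let $e$ be an integer with $e \ge \max(e_1,\dots,e_r)$ and $e \ge 1$. Then $$b^e \equiv \sum_{i \in R\setminus T} d_{R\setminus\{i\}}\; b^{\,e \bmod \varphi(p_i^{e_i})} \pmod{m},$$ where $e \bmod \varphi(p_i^{e_i})$ denotes the least nonnegative residue and $b^0$ is interpreted as $1$ (so that $d_{R\setminus\{i\}} b^0 = d_{R\setminus\{i\}}$).
   Context: Let $m = p_1^{e_1}\cdots p_r^{e_r}$ with $r \ge 1$, distinct primes $p_1,\dots,p_r$ and exponents $e_i \ge 1$, and let $R=\{1,\dots,r\}$. For $I \subseteq R$, $g_I = \prod_{i\in I} p_i^{e_i}$ and $d_I$ denotes the idempotent of $\mathbb{Z}/m\mathbb{Z}$ determined by $I$: the unique residue class modulo $m$ with $d_I \equiv 0 \pmod{p_i^{e_i}}$ for all $i \in I$ and $d_I \equiv 1 \pmod{p_i^{e_i}}$ for all $i \in R\setminus I$. $\varphi$ is Euler's totient function. (An empty sum is $0$.) *)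

From mathcomp Require Import all_boot all_order all_algebra.
Set Implicit Arguments. Unset Strict Implicit. Unset Printing Implicit Defensive.
Import Order.TTheory GRing.Theory Num.Theory.

Definition modulus (r : nat) (p ex : 'I_r -> nat) : nat :=
  \prod_(i < r) p i ^ ex i.

Definition gpart (r : nat) (p ex : 'I_r -> nat) (I : {set 'I_r}) : nat :=
  \prod_(i in I) p i ^ ex i.

Definition radpart (r : nat) (p : 'I_r -> nat) (T : {set 'I_r}) : nat :=
  \prod_(i in T) p i.

(* d is an idempotent of Z/mZ determined by I: an integer representative of
   the residue class d_I (unique modulo m). *)
Definition is_idem_rep (r : nat) (p ex : 'I_r -> nat) (I : {set 'I_r}) (d : int) : Prop :=
  forall i : 'I_r,
    (i \in I -> (d = 0 %[mod (p i ^ ex i)%:Z])%Z) /\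
    (i \notin I -> (d = 1 %[mod (p i ^ ex i)%:Z])%Z).

From mathcomp Require Import all_boot all_order all_algebra cyclic.
Set Implicit Arguments. Unset Strict Implicit. Unset Printing Implicit Defensive.
Import Order.TTheory GRing.Theory Num.Theory.
Local Open Scope ring_scope.

(* Since m = prod_j p_j^{e_j} with pairwise coprime factors,
   a congruence modulo m holds as soon as it holds modulo every p_j^{e_j}
   (Chinese remainder theorem, in the form "pairwise coprime divisors have
   their product as divisor").  Fix j and put q = p_j^{e_j}.
   - The idempotent d_{R\{i}} vanishes modulo q for i <> j and is 1 modulo q
     for i = j, so the right-hand side is congruent to b^{e mod phi(q)} when
     j is not in T, and to 0 when j is in T.
   - If j is in T, then p_j divides pi_T, hence q = p_j^{e_j} divides b^e
     because e >= e_j; both sides vanish modulo q.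
   - If j is not in T, then b is a unit modulo q (p_j does not divide pi_T
     and q divides m / g_T, which is coprime to x), so by Euler's theorem
     b^e = b^{e mod phi(q)} modulo q. *)

Lemma euler_int (b : int) (n : nat) : (0 < n)%N -> coprimez b n ->
  (b ^+ totient n = 1 %[mod n])%Z.
Proof.
move=> n_gt0 cop_bn.
have bn_ge0 : 0 <= (b %% n)%Z by apply: modz_ge0; rewrite eqz_nat -lt0n.
rewrite -modzXm -(gez0_abs bn_ge0).
have cop_an : coprime `|(b %% n)%Z|%N n.
  by have : coprimez (b %% n)%Z n by rewrite /coprimez gcdz_modl.
have := Euler_exp_totient cop_an => /(congr1 Posz).
by rewrite -!modz_nat -!natz natrX => ->.
Qed.

Lemma expz_mod_totient (b : int) (n k : nat) : (0 < n)%N -> coprimez b n ->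
  (b ^+ k = b ^+ (k %% totient n) %[mod n])%Z.
Proof.
move=> n_gt0 cop_bn.
rewrite {1}(divn_eq k (totient n)) exprD mulnC exprM.
by rewrite -modzMml -modzXm euler_int // modzXm expr1n modzMml mul1r.
Qed.

Lemma dvdn_prod_coprime (I : eqType) (f : I -> nat) (s : seq I) (n : nat) :
  uniq s -> {in s &, forall i j, i != j -> coprime (f i) (f j)} ->
  {in s, forall i, f i %| n}%N -> (\prod_(i <- s) f i %| n)%N.
Proof.
elim: s => [|a s IH] /=; first by rewrite big_nil dvd1n.
move=> /andP[a_notin_s uniq_s] cop dvd_n.
have cop_a : coprime (f a) (\prod_(i <- s) f i).
  rewrite big_seq; apply: (big_ind (coprime (f a))) => [||i i_in_s].
  - exact: coprimen1.
  - by move=> y z cop_y cop_z; rewrite coprimeMr cop_y cop_z.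
  - by rewrite cop ?mem_head ?inE ?i_in_s ?orbT //; apply: contraNneq a_notin_s => ->.
rewrite big_cons Gauss_dvd // dvd_n ?mem_head // IH // => [i j i_in_s j_in_s|i i_in_s].
  by apply: cop; rewrite inE ?i_in_s ?j_in_s orbT.
by apply: dvd_n; rewrite inE i_in_s orbT.
Qed.

Section PrimePowerFactorisation.

Variables (r : nat) (p ex : 'I_r -> nat).
Hypothesis p_prime : forall i, prime (p i).
Hypothesis p_inj : injective p.

Local Notation m := (modulus p ex).
Local Notation q i := (p i ^ ex i)%N.

Lemma prime_power_gt0 i : (0 < q i)%N.
Proof. by rewrite expn_gt0 prime_gt0. Qed.

Lemma coprime_prime_powers i j : i != j -> coprime (q i) (q j).
Proof.
move=> neq_ij; apply/coprimeXl/coprimeXr.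
rewrite prime_coprime // dvdn_prime2 //.
by apply: contra neq_ij => /eqP/p_inj ->.
Qed.

Lemma modulus_dvdz (z : int) : (forall j, ((q j)%:Z %| z)%Z) -> (m%:Z %| z)%Z.
Proof.
move=> dvd_z; rewrite dvdzE /modulus.
apply: dvdn_prod_coprime => [|i j _ _|j _]; first exact: index_enum_uniq.
  exact: coprime_prime_powers.
exact: dvd_z.
Qed.

Lemma modulus_split (T : {set 'I_r}) :
  m = (gpart p ex T * \prod_(i in ~: T) q i)%N.
Proof.
rewrite /modulus /gpart (bigID (mem T)) /=.
by congr (_ * _); apply: eq_bigl => i; rewrite inE.
Qed.

Lemma prime_power_dvd_radpart (T : {set 'I_r}) j k :
  j \in T -> (ex j <= k)%N -> (q j %| radpart p T ^ k)%N.
Proof.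
move=> jT le_ej_k; apply: dvdn_trans (dvdn_exp2l (p j) le_ej_k) _.
by apply: dvdn_exp2r; rewrite /radpart (bigD1 j) //= dvdn_mulr.
Qed.

Lemma coprime_radpart (T : {set 'I_r}) j :
  j \notin T -> coprime (radpart p T) (p j).
Proof.
move=> jNT; apply: (big_ind (coprime^~ (p j))) => [||i iT].
- exact: coprime1n.
- by move=> y z cop_y cop_z; rewrite coprimeMl cop_y cop_z.
rewrite prime_coprime // dvdn_prime2 //.
by apply: contraNneq jNT => /p_inj <-.
Qed.

Lemma idem_combination_mod (d : {set 'I_r} -> int)
    (hd : forall I, is_idem_rep p ex I (d I)) (A : {set 'I_r}) (c : 'I_r -> int) j :
  (\sum_(i in A) d (setT :\ i) * c i
     = if j \in A then c j else 0 %[mod (q j)%:Z])%Z.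
Proof.
have d_vanish i : i != j -> ((q j)%:Z %| d (setT :\ i))%Z.
  move=> neq_ij; have [d0 _] := hd (setT :\ i) j.
  by apply/dvdz_mod0P; rewrite d0 ?mod0z // !inE eq_sym neq_ij.
have rest_vanish : ((q j)%:Z %| \sum_(i in A | i != j) d (setT :\ i) * c i)%Z.
  by apply: rpred_sum => i /andP[_ neq_ij]; apply/dvdz_mulr/d_vanish.
case: ifP => jA; last first.
  rewrite (eq_bigl (fun i => (i \in A) && (i != j))) => [|i].
    by apply/eqP; rewrite eqz_mod_dvd subr0.
  by case: eqP => [->|]; rewrite ?jA ?andbT.
have [_ d1] := hd (setT :\ j) j.
rewrite (bigD1 j) //= -modzDm (dvdz_mod0P rest_vanish) addr0 modz_mod.
by rewrite -modzMml d1 ?modzMml ?mul1r // !inE eqxx.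
Qed.

End PrimePowerFactorisation.

Theorem mainTheorem19 (r : nat) (p ex : 'I_r -> nat)
  (hr : (0 < r)%N)
  (hp : forall i, prime (p i))
  (hinj : injective p)
  (hex : forall i, (1 <= ex i)%N)
  (d : {set 'I_r} -> int)
  (hd : forall I, is_idem_rep p ex I (d I))
  (T : {set 'I_r}) (x : int)
  (hx : coprimez x (modulus p ex %/ gpart p ex T)%:Z)
  (k : nat)
  (hk1 : (1 <= k)%N)
  (hkmax : forall i, (ex i <= k)%N) :
  let b : int := (radpart p T)%:Z * x in
  (b ^+ k = \sum_(i in ~: T) d (setT :\ i) * b ^+ (k %% totient (p i ^ ex i))
     %[mod (modulus p ex)%:Z])%Z.
Proof.
move=> b; apply/eqP; rewrite eqz_mod_dvd; apply: modulus_dvdz => // j.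
rewrite -eqz_mod_dvd (idem_combination_mod hd) inE.
case: (boolP (j \in T)) => jT /=.
  rewrite eqz_mod_dvd subr0 /b exprMn; apply: dvdz_mulr.
  by rewrite -natz -natrX natz dvdzE prime_power_dvd_radpart.
have cop_b : coprimez b (p j ^ ex j)%N.
  rewrite coprimezMl [coprimez _ _]coprime_pexpr ?coprime_radpart //=.
  apply: coprimez_dvdr hx; rewrite (modulus_split _ _ T) mulKn.
    by rewrite (bigD1 j) ?inE //= dvdn_mulr.
  by rewrite prodn_gt0 // => i; apply: prime_power_gt0.
by apply/eqP/expz_mod_totient => //; apply: prime_power_gt0.
Qed.
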